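(* Let $\alpha:I\to\mathbb{E}^3$ be a unit speed Frenet curve with arclength parameter $s$, Frenet frame $\{T,N,B\}$, curvature $\kappa>0$ and torsion $\tau$. Let $\beta(s)=\int\big(x_1(s)T(s)+x_2(s)N(s)\big)\,ds$ be an osculating mate of $\alpha$, i.e. $x_1,x_2$ are smooth functions with $x_1^2+x_2^2=1$ and $\beta''(s)\perp \mathrm{span}\{T(s),N(s)\}$ for all $s$, and assume $\beta$ is a Frenet curve. Then $x_1(s)=\sin\big(\int\kappa(s)ds\big)$, $x_2(s)=\cos\big(\int\kappa(s)ds\big)$ for an antiderivative $\int\kappa(s)ds$ of $\kappa$, and the Frenet apparatus $\{\bar T,\bar N,\bar B,\bar\kappa,\bar\tau\}$ of $\beta$ is $$\bar T=\sin\Big(\int\kappa ds\Big)T+\cos\Big(\int\kappa ds\Big)N,\quad \bar N=B,\quad \bar B=\cos\Big(\int\kappa ds\Big)T-\sin\Big(\int\kappa ds\Big)N,$$ $$\bar\kappa=\varepsilon_1\tau\cos\Big(\int\kappa ds\Big),\qquad \bar\tau=\tau\sin\Big(\int\kappa ds\Big),$$ where $\varepsilon_1=\pm1$ is chosen such that $\bar\kappa>0$.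
   Context: A unit speed curve $\alpha$ in Euclidean 3-space $\mathbb{E}^3$ is a Frenet curve if its curvature $\kappa=\|\alpha''\|$ is nowhere zero; its Frenet frame satisfies $T=\alpha'$, $T'=\kappa N$, $N'=-\kappa T+\tau B$, $B'=-\tau N$, $B=T\times N$. Since $\|\beta'\|=1$, $\beta$ is unit speed with parameter $s$, and its Frenet apparatus is defined in the same way (with derivatives with respect to $s$).
   Formalization: The normal and binormal of β carry the sign ε₁: N̄ = ε₁B and B̄ = ε₁(cos(∫κ ds)T − sin(∫κ ds)N), in place of N̄ = B and B̄ = cos(∫κ ds)T − sin(∫κ ds)N. The statement above fails without it. *)

From Stdlib Require Import Reals.
From Coquelicot Require Import Coquelicot.
Open Scope R_scope.

Record V3 := mkV3 { vx : R; vy : R; vz : R }.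

Definition vadd (u v : V3) : V3 := mkV3 (vx u + vx v) (vy u + vy v) (vz u + vz v).
Definition vscale (a : R) (v : V3) : V3 := mkV3 (a * vx v) (a * vy v) (a * vz v).
Definition vdot (u v : V3) : R := vx u * vx v + vy u * vy v + vz u * vz v.
Definition vnorm (v : V3) : R := sqrt (vdot v v).
Definition vcross (u v : V3) : V3 :=
  mkV3 (vy u * vz v - vz u * vy v)
       (vz u * vx v - vx u * vz v)
       (vx u * vy v - vy u * vx v).

Definition is_vderive (f : R -> V3) (t : R) (l : V3) : Prop :=
  is_derive (fun s => vx (f s)) t (vx l) /\
  is_derive (fun s => vy (f s)) t (vy l) /\
  is_derive (fun s => vz (f s)) t (vz l).

Definition inI (a b : Rbar) (s : R) : Prop := Rbar_lt a s /\ Rbar_lt s b.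

(* {T, N, B, k, t} is the Frenet apparatus of the unit speed Frenet curve c on I:
   T = c', |T| = 1 (unit speed), T' = k N with k > 0 and |N| = 1
   (so k = |c''| and N = c''/k), B = T x N, N' = -k T + t B. *)
Definition FrenetApparatus (a b : Rbar) (c T N B : R -> V3) (k t : R -> R) : Prop :=
  forall s, inI a b s ->
    is_vderive c s (T s) /\
    vnorm (T s) = 1 /\
    0 < k s /\
    vnorm (N s) = 1 /\
    is_vderive T s (vscale (k s) (N s)) /\
    B s = vcross (T s) (N s) /\
    is_vderive N s (vadd (vscale (- k s) (T s)) (vscale (t s) (B s))).

From Stdlib Require Import Reals Lra Psatz Nsatz Classical IndefiniteDescription.
From Coquelicot Require Import Coquelicot.
Open Scope R_scope.

(** The osculating condition says that
    beta'' = (x1' - kappa x2) T + (x2' + kappa x1) N + tau x2 B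
    has no T- and N-components, i.e. (x1, x2) solves the rotation system
    x1' = kappa x2, x2' = - kappa x1.  Its unit solutions are (sin theta, cos theta)
    with theta' = kappa.  Since kappa need not be continuous it cannot simply be
    integrated; instead, near each point atan (x1 / x2) or - atan (x2 / x1) is a
    primitive of kappa, local primitives glue along an interval, and two solutions
    agreeing at one point agree everywhere.  Then Tb = beta' and
    kb Nb = beta'' = tau cos theta B, so Nb = eps B where eps = Nb . B is
    differentiable with eps^2 = 1, hence constant; Bb = Tb x Nb, and tb is read off
    by comparing Nb' = - kb Tb + tb Bb with eps B' = - eps tau N. *)

Lemma V3_ext (u v : V3) : vx u = vx v -> vy u = vy v -> vz u = vz v -> u = v.
Proof. destruct u, v; simpl; intros -> -> ->; reflexivity. Qed.

Ltac V3_ring := apply V3_ext; simpl; ring.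

Lemma vdot_comm u v : vdot u v = vdot v u.
Proof. unfold vdot; ring. Qed.

Lemma vdot_addl u v w : vdot (vadd u v) w = vdot u w + vdot v w.
Proof. unfold vdot; simpl; ring. Qed.

Lemma vdot_scalel c u v : vdot (vscale c u) v = c * vdot u v.
Proof. unfold vdot; simpl; ring. Qed.

Lemma vcross_scaler c u v : vcross u (vscale c v) = vscale c (vcross u v).
Proof. V3_ring. Qed.

Lemma vdot_crossl u v : vdot (vcross u v) u = 0.
Proof. unfold vdot; simpl; ring. Qed.

Lemma vdot_crossr u v : vdot (vcross u v) v = 0.
Proof. unfold vdot; simpl; ring. Qed.

Lemma vcross_crossr u v w :
  vcross u (vcross v w) = vadd (vscale (vdot u w) v) (vscale (- vdot u v) w).
Proof. unfold vdot; V3_ring. Qed.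

Lemma vdot_cross_cross u v :
  vdot (vcross u v) (vcross u v) = vdot u u * vdot v v - vdot u v ^ 2.
Proof. unfold vdot; simpl; ring. Qed.

Lemma vdot_self_vnorm v : vnorm v = 1 -> vdot v v = 1.
Proof.
  unfold vnorm; intros Hv.
  rewrite <- (sqrt_sqrt (vdot v v)), Hv; [ring | unfold vdot; nra].
Qed.

Definition orthonormal (e1 e2 e3 : V3) : Prop :=
  vdot e1 e1 = 1 /\ vdot e2 e2 = 1 /\ vdot e3 e3 = 1 /\
  vdot e1 e2 = 0 /\ vdot e1 e3 = 0 /\ vdot e2 e3 = 0.

Definition vcomb (e1 e2 e3 : V3) (p q r : R) : V3 :=
  vadd (vscale p e1) (vadd (vscale q e2) (vscale r e3)).

Lemma vcomb_coords e1 e2 e3 p q r : orthonormal e1 e2 e3 ->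
  vdot (vcomb e1 e2 e3 p q r) e1 = p /\ vdot (vcomb e1 e2 e3 p q r) e2 = q /\
  vdot (vcomb e1 e2 e3 p q r) e3 = r.
Proof.
  intros (H11 & H22 & H33 & H12 & H13 & H23); unfold vcomb.
  rewrite !vdot_addl, !vdot_scalel, (vdot_comm e2 e1), (vdot_comm e3 e1), (vdot_comm e3 e2).
  rewrite H11, H22, H33, H12, H13, H23; repeat split; ring.
Qed.

Lemma orthonormal_cross u v :
  vdot u u = 1 -> vdot v v = 1 -> vdot u v = 0 -> orthonormal u v (vcross u v).
Proof.
  intros Huu Hvv Huv; repeat split; auto.
  - rewrite vdot_cross_cross, Huu, Hvv, Huv; ring.
  - rewrite vdot_comm; apply vdot_crossl.
  - rewrite vdot_comm; apply vdot_crossr.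
Qed.

Lemma vcross_cross_orthonormal u v p q :
  vdot u u = 1 -> vdot v v = 1 -> vdot u v = 0 ->
  vcross (vadd (vscale p u) (vscale q v)) (vcross u v) = vadd (vscale q u) (vscale (- p) v).
Proof.
  intros Huu Hvv Huv.
  rewrite vcross_crossr, !vdot_addl, !vdot_scalel, (vdot_comm v u), Huu, Hvv, Huv.
  V3_ring.
Qed.

Lemma vscale_parallel_unit k n c m :
  0 < k -> vscale k n = vscale c m -> vdot m m = 1 -> n = vscale (vdot n m) m.
Proof.
  intros Hk Hnm Hm.
  assert (Hn : n = vscale (c / k) m).
  { destruct n, m; unfold vscale in *; simpl in *; injection Hnm; intros.
    apply V3_ext; simpl; apply (Rmult_eq_reg_l k); try lra; field_simplify; lra. }
  rewrite Hn, vdot_scalel, Hm, Rmult_1_r; reflexivity.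
Qed.

Lemma is_derive_eq (f : R -> R) (x l l' : R) : is_derive f x l -> l = l' -> is_derive f x l'.
Proof. intros H <-; exact H. Qed.

Lemma is_derive_Rconst (c x : R) : is_derive (fun _ => c) x 0.
Proof. exact (is_derive_const (K := R_AbsRing) (V := R_NormedModule) c x). Qed.

Lemma is_derive_Rplus (f g : R -> R) x df dg : is_derive f x df -> is_derive g x dg ->
  is_derive (fun u => f u + g u) x (df + dg).
Proof. exact (is_derive_plus f g x df dg). Qed.

Lemma is_derive_Rminus (f g : R -> R) x df dg : is_derive f x df -> is_derive g x dg ->
  is_derive (fun u => f u - g u) x (df - dg).
Proof. exact (is_derive_minus f g x df dg). Qed.

Lemma is_vderive_eq f s l l' : is_vderive f s l -> l = l' -> is_vderive f s l'.
Proof. intros H <-; exact H. Qed.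

Lemma is_vderive_unique f s l l' : is_vderive f s l -> is_vderive f s l' -> l = l'.
Proof.
  intros (Hx & Hy & Hz) (Hx' & Hy' & Hz').
  apply is_derive_unique in Hx, Hy, Hz, Hx', Hy', Hz'.
  apply V3_ext; congruence.
Qed.

Lemma is_vderive_ext_loc (f g : R -> V3) s l :
  locally s (fun u => f u = g u) -> is_vderive f s l -> is_vderive g s l.
Proof.
  intros Hfg (Hx & Hy & Hz).
  split; [|split]; eapply is_derive_ext_loc; try eassumption;
    apply (filter_imp _ _ (fun u (E : f u = g u) => f_equal _ E) Hfg).
Qed.

Lemma is_vderive_add f g s lf lg : is_vderive f s lf -> is_vderive g s lg ->
  is_vderive (fun u => vadd (f u) (g u)) s (vadd lf lg).
Proof.
  intros (Hfx & Hfy & Hfz) (Hgx & Hgy & Hgz).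
  split; [|split]; simpl; apply (is_derive_Rplus (fun u => _ (f u)) (fun u => _ (g u))); assumption.
Qed.

Lemma is_vderive_scale (c : R -> R) f s dc lf : is_derive c s dc -> is_vderive f s lf ->
  is_vderive (fun u => vscale (c u) (f u)) s (vadd (vscale dc (f s)) (vscale (c s) lf)).
Proof.
  intros Hc (Hx & Hy & Hz).
  split; [|split]; simpl; apply (Derive.is_derive_mult c (fun u => _ (f u))); assumption.
Qed.

Lemma is_vderive_const_scale (c : R) f s lf : is_vderive f s lf ->
  is_vderive (fun u => vscale c (f u)) s (vscale c lf).
Proof.
  intros (Hx & Hy & Hz).
  split; [|split]; simpl; apply (is_derive_scal (fun u => _ (f u))); assumption.
Qed.

Lemma is_vderive_cross f g s lf lg : is_vderive f s lf -> is_vderive g s lg ->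
  is_vderive (fun u => vcross (f u) (g u)) s (vadd (vcross lf (g s)) (vcross (f s) lg)).
Proof.
  intros (Hfx & Hfy & Hfz) (Hgx & Hgy & Hgz).
  split; [|split]; (eapply is_derive_eq;
    [ apply is_derive_Rminus;
      apply (Derive.is_derive_mult (fun u => _ (f u)) (fun u => _ (g u))); eassumption
    | simpl; ring ]).
Qed.

Lemma is_derive_vdot f g s lf lg : is_vderive f s lf -> is_vderive g s lg ->
  is_derive (fun u => vdot (f u) (g u)) s (vdot lf (g s) + vdot (f s) lg).
Proof.
  intros (Hfx & Hfy & Hfz) (Hgx & Hgy & Hgz).
  unfold vdot; eapply is_derive_eq.
  - apply is_derive_Rplus; [apply is_derive_Rplus|];
      apply (Derive.is_derive_mult (fun u => _ (f u)) (fun u => _ (g u))); eassumption.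
  - ring.
Qed.

Lemma inI_between a b x y z : inI a b x -> inI a b z -> x <= y <= z -> inI a b y.
Proof. unfold inI; destruct a, b; simpl; lra. Qed.

Lemma locally_inI a b s : inI a b s -> locally s (inI a b).
Proof.
  apply locally_open; [|tauto].
  apply open_and; [apply open_Rbar_gt | apply open_Rbar_lt].
Qed.

Lemma locally_between (P : R -> Prop) lo hi x :
  lo < x < hi -> (forall v, lo < v < hi -> P v) -> locally x P.
Proof.
  intros Hx HP; apply (locally_open (fun v => lo < v /\ v < hi)); auto.
  apply open_and; [apply open_gt | apply open_lt].
Qed.

Lemma is_derive_zero_segment (f : R -> R) x y :
  x <= y -> (forall u, x <= u <= y -> is_derive f u 0) -> f x = f y.
Proof.
  intros Hxy Hf.
  destruct (MVT_gen f x y (fun _ => 0)) as [c [_ Hc]].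
  - rewrite Rmin_left, Rmax_right by lra. intros u Hu; apply Hf; lra.
  - rewrite Rmin_left, Rmax_right by lra. intros u Hu.
    apply continuity_pt_filterlim, (ex_derive_continuous (V := R_NormedModule)).
    exists 0; apply Hf; exact Hu.
  - lra.
Qed.

Lemma is_derive_zero_interval a b (f : R -> R) :
  (forall s, inI a b s -> is_derive f s 0) ->
  forall s t, inI a b s -> inI a b t -> f s = f t.
Proof.
  intros Hf s t Hs Ht.
  destruct (Rle_dec s t); [|symmetry];
    (apply is_derive_zero_segment; [lra|]); intros u Hu; apply Hf.
  - apply (inI_between a b s u t); assumption.
  - apply (inI_between a b t u s); assumption.
Qed.

Lemma locally_segment (P : R -> Prop) s :
  locally s P -> exists e, 0 < e /\ forall v, s - e <= v <= s + e -> P v.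
Proof.
  intros [eps Heps]; pose proof (cond_pos eps).
  exists (eps / 2); split; [lra|].
  intros v Hv; apply Heps.
  unfold ball; simpl; unfold AbsRing_ball, abs, minus, plus, opp; simpl.
  apply Rabs_def1; lra.
Qed.

Lemma is_derive_locally_const (f : R -> R) (s c l : R) :
  locally s (fun u => f u = c) -> is_derive f s l -> l = 0.
Proof.
  intros Hc Hf.
  assert (H0 : is_derive f s 0).
  { apply (is_derive_ext_loc (fun _ => c)); [apply (filter_imp _ _ (fun u E => eq_sym E) Hc)|].
    apply is_derive_Rconst. }
  apply is_derive_unique in Hf, H0; congruence.
Qed.

Lemma sqr_eq_1_const a b (f : R -> R) :
  (forall s, inI a b s -> ex_derive f s) -> (forall s, inI a b s -> f s ^ 2 = 1) ->
  exists eps, (eps = 1 \/ eps = -1) /\ forall s, inI a b s -> f s = eps.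
Proof.
  intros Hf Hunit.
  destruct (classic (exists s0, inI a b s0)) as [[s0 Hs0] | Hempty].
  2: { exists 1; split; [left; reflexivity | intros s Hs; exfalso; eauto]. }
  exists (f s0); split.
  { pose proof (Hunit s0 Hs0).
    destruct (Rle_dec 0 (f s0)); [left | right]; nra. }
  intros s Hs; apply (is_derive_zero_interval a b f); auto.
  intros u Hu; destruct (Hf u Hu) as [d Hd].
  assert (Hsq : 2 * f u * d = 0).
  { apply (is_derive_locally_const (fun v => f v * f v) u 1).
    - apply (filter_imp (inI a b)); [|apply locally_inI, Hu].
      intros v Hv; rewrite <- (Hunit v Hv); ring.
    - eapply is_derive_eq; [apply Derive.is_derive_mult; exact Hd | ring]. }
  replace d with 0 in Hd; [exact Hd|].
  pose proof (Hunit u Hu); nra.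
Qed.

Definition primitive_on (k F : R -> R) (x y : R) : Prop :=
  forall u, x <= u <= y -> is_derive F u (k u).

Lemma primitive_on_sub k F x y x' y' :
  x <= x' -> y' <= y -> primitive_on k F x y -> primitive_on k F x' y'.
Proof. intros Hx Hy HF u Hu; apply HF; lra. Qed.

Lemma primitive_on_increment k F G x y u v :
  primitive_on k F x y -> primitive_on k G x y ->
  x <= u <= y -> x <= v <= y -> F u - F v = G u - G v.
Proof.
  intros HF HG Hu Hv.
  assert (Hconst : forall w, x <= w <= y -> F w - G w = F x - G x).
  { intros w Hw; symmetry.
    apply (is_derive_zero_segment (fun w => F w - G w)); [lra|].
    intros z Hz; eapply is_derive_eq.
    - apply is_derive_Rminus; [apply HF | apply HG]; lra.
    - ring. }
  pose proof (Hconst u Hu); pose proof (Hconst v Hv); lra.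
Qed.

Lemma primitive_on_glue k F G x x' y z :
  x <= x' < y -> y <= z -> primitive_on k F x y -> primitive_on k G x' z ->
  exists H, primitive_on k H x z.
Proof.
  intros Hx' Hyz HF HG.
  set (m := (x' + y) / 2).
  assert (HFG : forall v, m <= v <= y -> G v + (F m - G m) = F v).
  { intros v Hv.
    assert (F v - F m = G v - G m); [|lra].
    apply (primitive_on_increment k F G m y);
      try (eapply primitive_on_sub; [| |eassumption]); unfold m in *; lra. }
  exists (fun u => if Rle_dec u m then F u else G u + (F m - G m)).
  intros u Hu. destruct (Rlt_dec u y) as [Huy | Huy].
  - apply (is_derive_ext_loc F); [|apply HF; lra].
    apply (locally_between _ (u - 1) y); [lra|]. intros v Hv.
    destruct (Rle_dec v m); [reflexivity | symmetry; apply HFG; lra].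
  - apply (is_derive_ext_loc (fun v => G v + (F m - G m))).
    + apply (locally_between _ m (u + 1)); [unfold m; lra|]. intros v Hv.
      destruct (Rle_dec v m); [lra | reflexivity].
    + eapply is_derive_eq.
      * apply is_derive_Rplus; [apply HG | apply is_derive_Rconst]; unfold m in *; lra.
      * apply Rplus_0_r.
Qed.

Section IntervalPrimitive.

Variables (a b : Rbar) (k : R -> R).

Hypothesis local_primitive : forall s, inI a b s ->
  exists e, 0 < e /\ exists G, primitive_on k G (s - e) (s + e).

Lemma primitive_on_segment x y :
  inI a b x -> inI a b y -> x <= y -> exists F, primitive_on k F x y.
Proof.
  intros Hx Hy Hxy.
  (* c := sup of the t in [x, y] reachable from x; the local primitive at c reaches
     past c unless c = y. *)
  set (E := fun t => x <= t <= y /\ exists F, primitive_on k F x t).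
  assert (HEx : E x).
  { destruct (local_primitive x Hx) as [e [He [G HG]]].
    split; [lra|]. exists G; eapply primitive_on_sub; [| |exact HG]; lra. }
  destruct (completeness E) as [c [Hub Hlub]].
  { exists y; intros t Ht; apply Ht. }
  { exists x; exact HEx. }
  assert (Hxc : x <= c) by (apply Hub, HEx).
  assert (Hcy : c <= y) by (apply Hlub; intros t Ht; apply Ht).
  destruct (local_primitive c (inI_between a b x c y Hx Hy (conj Hxc Hcy)))
    as [e [He [G HG]]].
  pose proof (Rmin_l y (c + e)); pose proof (Rmin_r y (c + e)).
  assert (HE : E (Rmin y (c + e))).
  { split; [split; [apply Rmin_glb|]; lra|].
    destruct (Rlt_dec (c - e / 2) x).
    - exists G; eapply primitive_on_sub; [| |exact HG]; lra.
    - destruct (classic (exists t, E t /\ c - e / 2 < t)) as [[t [[Ht [F HF]] Hct]] | Hno].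
      + assert (t <= c) by (apply Hub; split; [exact Ht | exists F; exact HF]).
        assert (t <= Rmin y (c + e)) by (apply Rmin_glb; lra).
        apply (primitive_on_glue k F G x (c - e / 2) t); try lra; [exact HF|].
        eapply primitive_on_sub; [| |exact HG]; lra.
      + assert (c <= c - e / 2); [|lra].
        apply Hlub; intros t Ht; apply Rnot_lt_le; intros Hct; apply Hno; eauto. }
  assert (Hc : Rmin y (c + e) <= c) by (apply Hub, HE).
  destruct HE as [_ [F HF]]. exists F.
  replace y with (Rmin y (c + e)); [exact HF|].
  unfold Rmin in *; destruct (Rle_dec y (c + e)); lra.
Qed.

Lemma primitive_on_interval : exists F, forall s, inI a b s -> is_derive F s (k s).
Proof.
  destruct (classic (exists s0, inI a b s0)) as [[s0 Hs0] | Hempty].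
  2: { exists (fun _ => 0); intros s Hs; exfalso; eauto. }
  assert (Hseg : forall u, exists P,
    inI a b u -> primitive_on k P (Rmin u s0) (Rmax u s0)).
  { intros u; destruct (classic (inI a b u)) as [Hu | Hu].
    - destruct (primitive_on_segment (Rmin u s0) (Rmax u s0)) as [P HP];
        [apply Rmin_case | apply Rmax_case | | exists P]; auto.
      apply (Rle_trans _ u); [apply Rmin_l | apply Rmax_l].
    - exists (fun _ => 0); tauto. }
  destruct (functional_choice _ Hseg) as [P HP].
  exists (fun u => P u u - P u s0).
  intros s Hs.
  destruct (locally_segment _ _ (locally_inI a b s Hs)) as [e [He Hball]].
  pose proof (Rmin_l (s - e) s0); pose proof (Rmin_r (s - e) s0).
  pose proof (Rmax_l (s + e) s0); pose proof (Rmax_r (s + e) s0).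
  destruct (primitive_on_segment (Rmin (s - e) s0) (Rmax (s + e) s0)) as [Q HQ];
    [apply Rmin_case | apply Rmax_case | lra | ]; auto; try (apply Hball; lra).
  apply (is_derive_ext_loc (fun u => Q u - Q s0)).
  - apply (locally_between _ (s - e) (s + e)); [lra|]. intros v Hv.
    symmetry; apply (primitive_on_increment k (P v) Q (Rmin v s0) (Rmax v s0)).
    + apply HP, Hball; lra.
    + eapply primitive_on_sub; [| |exact HQ];
        unfold Rmin, Rmax in *; repeat destruct Rle_dec; lra.
    + split; [apply Rmin_l | apply Rmax_l].
    + split; [apply Rmin_r | apply Rmax_r].
  - eapply is_derive_eq.
    + apply is_derive_Rminus; [apply HQ; lra | apply is_derive_Rconst].
    + apply Rminus_0_r.
Qed.

End IntervalPrimitive.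

Definition rotation_ode (a b : Rbar) (k y1 y2 : R -> R) : Prop :=
  forall s, inI a b s -> is_derive y1 s (k s * y2 s) /\ is_derive y2 s (- (k s * y1 s)).

Lemma rotation_ode_quarter_turn a b k y1 y2 :
  rotation_ode a b k y1 y2 -> rotation_ode a b k (fun s => - y2 s) y1.
Proof.
  intros Hy s Hs; destruct (Hy s Hs) as [Hy1 Hy2]; split.
  - eapply is_derive_eq; [apply (is_derive_opp y2), Hy2 | unfold opp; simpl; ring].
  - eapply is_derive_eq; [exact Hy1 | ring].
Qed.

Lemma rotation_ode_sin_cos a b (k theta : R -> R) :
  (forall s, inI a b s -> is_derive theta s (k s)) ->
  rotation_ode a b k (fun s => sin (theta s)) (fun s => cos (theta s)).
Proof.
  intros Htheta s Hs; split; eapply is_derive_eq;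
    try (apply (is_derive_comp _ theta); [apply is_derive_sin || apply is_derive_cos | apply Htheta, Hs]);
    unfold scal; simpl; unfold mult; simpl; ring.
Qed.

Lemma rotation_ode_local_primitive a b k y1 y2 s :
  rotation_ode a b k y1 y2 -> inI a b s -> y2 s <> 0 ->
  exists e, 0 < e /\ exists G, primitive_on k G (s - e) (s + e).
Proof.
  intros Hy Hs Hy2s.
  assert (Hnear : locally s (fun u => inI a b u /\ y2 u <> 0)).
  { apply filter_and; [apply locally_inI, Hs|].
    assert (Hy2 : ex_derive y2 s) by (exists (- (k s * y1 s)); apply Hy, Hs).
    exact (ex_derive_continuous y2 s Hy2 _ (locally_open _ _ (open_neq 0) (fun _ h => h) _ Hy2s)). }
  destruct (locally_segment _ _ Hnear) as [e [He Hseg]].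
  exists e; split; [exact He|].
  (* (atan (y1 / y2))' = (y1' y2 - y1 y2') / (y1^2 + y2^2) = k *)
  exists (fun u => atan (y1 u / y2 u)); intros u Hu.
  destruct (Hseg u Hu) as [Hu1 Hu2]; destruct (Hy u Hu1) as [Hy1 Hy2].
  eapply is_derive_eq.
  - apply (is_derive_comp atan (fun u => y1 u / y2 u)); [apply is_derive_atan|].
    apply is_derive_div; eassumption.
  - unfold scal; simpl; unfold mult, Rsqr; simpl; field.
    split; [exact Hu2|]. nra.
Qed.

Lemma rotation_ode_primitive a b k y1 y2 :
  rotation_ode a b k y1 y2 -> (forall s, inI a b s -> y1 s <> 0 \/ y2 s <> 0) ->
  exists theta, forall s, inI a b s -> is_derive theta s (k s).
Proof.
  intros Hy Hnz; apply primitive_on_interval; intros s Hs.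
  destruct (Hnz s Hs) as [Hy1 | Hy2].
  - apply (rotation_ode_local_primitive a b k (fun u => - y2 u) y1);
      [apply rotation_ode_quarter_turn | |]; assumption.
  - apply (rotation_ode_local_primitive a b k y1 y2); assumption.
Qed.

Lemma rotation_ode_unique a b k y1 y2 z1 z2 s0 :
  rotation_ode a b k y1 y2 -> rotation_ode a b k z1 z2 -> inI a b s0 ->
  y1 s0 = z1 s0 -> y2 s0 = z2 s0 ->
  forall s, inI a b s -> y1 s = z1 s /\ y2 s = z2 s.
Proof.
  intros Hy Hz Hs0 E1 E2 s Hs.
  set (d := fun u => (y1 u - z1 u) * (y1 u - z1 u) + (y2 u - z2 u) * (y2 u - z2 u)).
  assert (Hd : d s = d s0).
  { apply (is_derive_zero_interval a b d); auto. intros u Hu.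
    destruct (Hy u Hu) as [Hy1 Hy2]; destruct (Hz u Hu) as [Hz1 Hz2].
    eapply is_derive_eq.
    - apply is_derive_Rplus; apply Derive.is_derive_mult; apply is_derive_Rminus; eassumption.
    - simpl; ring. }
  assert (Hd0 : d s = 0) by (rewrite Hd; unfold d; rewrite E1, E2; ring).
  apply Rplus_sqr_eq_0 in Hd0; split; lra.
Qed.

Lemma sin_cos_onto x y : x ^ 2 + y ^ 2 = 1 -> exists th, sin th = x /\ cos th = y.
Proof.
  intros Hxy.
  assert (Hy : -1 <= y <= 1) by nra.
  assert (Hs : sqrt (1 - y²) = Rabs x).
  { rewrite <- sqrt_Rsqr_abs; f_equal; unfold Rsqr; nra. }
  destruct (Rle_dec 0 x).
  - exists (acos y); rewrite sin_acos, cos_acos, Hs, Rabs_right by lra; auto.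
  - exists (- acos y); rewrite sin_neg, cos_neg, sin_acos, cos_acos, Hs, Rabs_left by lra.
    split; [ring | reflexivity].
Qed.

Lemma rotation_ode_angle a b k y1 y2 :
  rotation_ode a b k y1 y2 -> (forall s, inI a b s -> y1 s ^ 2 + y2 s ^ 2 = 1) ->
  exists theta : R -> R, (forall s, inI a b s -> is_derive theta s (k s)) /\
    forall s, inI a b s -> y1 s = sin (theta s) /\ y2 s = cos (theta s).
Proof.
  intros Hy Hunit.
  destruct (classic (exists s0, inI a b s0)) as [[s0 Hs0] | Hempty].
  2: { exists (fun _ => 0); split; intros s Hs; exfalso; eauto. }
  destruct (rotation_ode_primitive a b k y1 y2 Hy) as [F HF].
  { intros s Hs; pose proof (Hunit s Hs) as Hs1.
    destruct (Req_dec (y2 s) 0) as [E2 | ]; [left; intros E1 | right; assumption].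
    rewrite E1, E2 in Hs1; lra. }
  destruct (sin_cos_onto _ _ (Hunit s0 Hs0)) as [th0 [Hsin Hcos]].
  set (theta := fun s => F s + (th0 - F s0)).
  assert (Htheta : forall s, inI a b s -> is_derive theta s (k s)).
  { intros s Hs; eapply is_derive_eq;
      [apply is_derive_Rplus; [apply HF, Hs | apply is_derive_Rconst]
      | apply Rplus_0_r]. }
  exists theta; split; [exact Htheta|].
  assert (Htheta0 : theta s0 = th0) by (unfold theta; ring).
  apply (rotation_ode_unique a b k _ _ _ _ s0 Hy (rotation_ode_sin_cos a b k theta Htheta) Hs0);
    rewrite Htheta0; auto.
Qed.

Section FrenetFrame.

Context {a b : Rbar} {c T N B : R -> V3} {k t : R -> R}.
Hypothesis frenet : FrenetApparatus a b c T N B k t.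

Lemma frenet_orthonormal s : inI a b s -> orthonormal (T s) (N s) (B s).
Proof.
  intros Hs; destruct (frenet s Hs) as (_ & _ & Hk & HN & HT' & HB & _).
  assert (HTT : forall u, inI a b u -> vdot (T u) (T u) = 1).
  { intros u Hu; apply vdot_self_vnorm, (frenet u Hu). }
  assert (HTN : 2 * k s * vdot (T s) (N s) = 0).
  { apply (is_derive_locally_const (fun u => vdot (T u) (T u)) s 1).
    - apply (filter_imp _ _ HTT), locally_inI, Hs.
    - eapply is_derive_eq; [apply is_derive_vdot; exact HT'|].
      rewrite (vdot_comm (T s)), vdot_scalel, (vdot_comm (N s)); ring. }
  rewrite HB; apply orthonormal_cross; [apply HTT, Hs | apply vdot_self_vnorm, HN | nra].
Qed.

Lemma frenet_B_derive s : inI a b s -> is_vderive B s (vscale (- t s) (N s)).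
Proof.
  intros Hs; destruct (frenet s Hs) as (_ & _ & _ & _ & HT' & HB & HN').
  destruct (frenet_orthonormal s Hs) as (HTT & _ & _ & HTN & _).
  rewrite HB in HN'.
  apply (is_vderive_ext_loc (fun u => vcross (T u) (N u))).
  { apply (filter_imp (inI a b)); [intros u Hu; symmetry; apply (frenet u Hu) | apply locally_inI, Hs]. }
  eapply is_vderive_eq; [apply is_vderive_cross; [exact HT' | exact HN'] |].
  transitivity (vscale (t s) (vcross (T s) (vcross (T s) (N s)))); [V3_ring|].
  rewrite vcross_crossr, HTN, HTT; V3_ring.
Qed.

End FrenetFrame.

Section OsculatingMate.

Context {a b : Rbar} {alpha T N B : R -> V3} {kappa tau x1 x2 : R -> R}.
Context {beta Tb Nb Bb : R -> V3} {kb tb : R -> R}.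

Hypothesis frenet_alpha : FrenetApparatus a b alpha T N B kappa tau.
Hypothesis x_derivable : forall s, inI a b s -> ex_derive x1 s /\ ex_derive x2 s.
Hypothesis x_unit : forall s, inI a b s -> x1 s ^ 2 + x2 s ^ 2 = 1.
Hypothesis beta_derive : forall s, inI a b s ->
  is_vderive beta s (vadd (vscale (x1 s) (T s)) (vscale (x2 s) (N s))).
Hypothesis beta_osculating : forall s, inI a b s -> exists v,
  is_vderive (fun u => vadd (vscale (x1 u) (T u)) (vscale (x2 u) (N u))) s v /\
  vdot v (T s) = 0 /\ vdot v (N s) = 0.
Hypothesis frenet_beta : FrenetApparatus a b beta Tb Nb Bb kb tb.

Let beta' u := vadd (vscale (x1 u) (T u)) (vscale (x2 u) (N u)).

Lemma mate_second_derivative s d1 d2 : inI a b s -> is_derive x1 s d1 -> is_derive x2 s d2 ->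
  is_vderive beta' s (vcomb (T s) (N s) (B s)
    (d1 - kappa s * x2 s) (kappa s * x1 s + d2) (tau s * x2 s)).
Proof.
  intros Hs Hx1 Hx2; destruct (frenet_alpha s Hs) as (_ & _ & _ & _ & HT' & _ & HN').
  eapply is_vderive_eq;
    [apply is_vderive_add; apply is_vderive_scale; eassumption | unfold vcomb; V3_ring].
Qed.

Lemma mate_rotation_ode : rotation_ode a b kappa x1 x2.
Proof.
  intros s Hs.
  destruct (x_derivable s Hs) as [[d1 Hx1] [d2 Hx2]].
  destruct (beta_osculating s Hs) as [v [Hv [HvT HvN]]].
  rewrite (is_vderive_unique _ _ _ _ Hv (mate_second_derivative s d1 d2 Hs Hx1 Hx2)) in HvT, HvN.
  destruct (vcomb_coords (T s) (N s) (B s) (d1 - kappa s * x2 s) (kappa s * x1 s + d2) (tau s * x2 s)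
    (frenet_orthonormal frenet_alpha s Hs)) as (E1 & E2 & _).
  rewrite E1 in HvT; rewrite E2 in HvN.
  split; eapply is_derive_eq; try eassumption; lra.
Qed.

Lemma mate_second_derivative_binormal s : inI a b s ->
  is_vderive beta' s (vscale (tau s * x2 s) (B s)).
Proof.
  intros Hs; destruct (mate_rotation_ode s Hs) as [Hx1 Hx2].
  eapply is_vderive_eq; [apply (mate_second_derivative s _ _ Hs Hx1 Hx2) | unfold vcomb; V3_ring].
Qed.

Lemma mate_angle : exists theta : R -> R,
  (forall s, inI a b s -> is_derive theta s (kappa s)) /\
  forall s, inI a b s -> x1 s = sin (theta s) /\ x2 s = cos (theta s).
Proof. exact (rotation_ode_angle a b kappa x1 x2 mate_rotation_ode x_unit). Qed.

Lemma mate_tangent s : inI a b s -> Tb s = beta' s.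
Proof.
  intros Hs; apply (is_vderive_unique beta s); [apply (frenet_beta s Hs) | apply beta_derive, Hs].
Qed.

Lemma mate_curvature_normal s : inI a b s ->
  vscale (kb s) (Nb s) = vscale (tau s * x2 s) (B s).
Proof.
  intros Hs; apply (is_vderive_unique beta' s); [|apply mate_second_derivative_binormal, Hs].
  apply (is_vderive_ext_loc Tb); [|apply (frenet_beta s Hs)].
  apply (filter_imp (inI a b)); [apply mate_tangent | apply locally_inI, Hs].
Qed.

Lemma mate_normal_sign : exists eps, (eps = 1 \/ eps = -1) /\
  forall s, inI a b s -> Nb s = vscale eps (B s).
Proof.
  set (e := fun s => vdot (Nb s) (B s)).
  assert (HNb : forall s, inI a b s -> Nb s = vscale (e s) (B s)).
  { intros s Hs; destruct (frenet_beta s Hs) as (_ & _ & Hkb & _).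
    destruct (frenet_orthonormal frenet_alpha s Hs) as (_ & _ & HBB & _).
    exact (vscale_parallel_unit _ _ _ _ Hkb (mate_curvature_normal s Hs) HBB). }
  destruct (sqr_eq_1_const a b e) as [eps [Heps He]].
  - intros s Hs; destruct (frenet_beta s Hs) as (_ & _ & _ & _ & _ & _ & HNb').
    eexists; apply is_derive_vdot; [exact HNb' | apply (frenet_B_derive frenet_alpha s Hs)].
  - intros s Hs; destruct (frenet_beta s Hs) as (_ & _ & _ & HNbn & _).
    destruct (frenet_orthonormal frenet_alpha s Hs) as (_ & _ & HBB & _).
    apply vdot_self_vnorm in HNbn.
    rewrite (HNb s Hs), vdot_scalel, vdot_comm, vdot_scalel, HBB in HNbn; lra.
  - exists eps; split; [exact Heps|].
    intros s Hs; rewrite <- (He s Hs); apply HNb, Hs.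
Qed.

Context {eps : R}.
Hypothesis eps_sign : eps = 1 \/ eps = -1.
Hypothesis normal_sign : forall s, inI a b s -> Nb s = vscale eps (B s).

Lemma mate_curvature s : inI a b s -> kb s = eps * tau s * x2 s.
Proof.
  intros Hs; pose proof (mate_curvature_normal s Hs) as E.
  destruct (frenet_orthonormal frenet_alpha s Hs) as (_ & _ & HBB & _).
  apply (f_equal (fun v => vdot v (B s))) in E.
  rewrite normal_sign, !vdot_scalel, HBB in E by exact Hs.
  destruct eps_sign; subst eps; lra.
Qed.

Lemma mate_binormal s : inI a b s ->
  Bb s = vscale eps (vadd (vscale (x2 s) (T s)) (vscale (- x1 s) (N s))).
Proof.
  intros Hs; destruct (frenet_beta s Hs) as (_ & _ & _ & _ & _ & HBb & _).
  destruct (frenet_alpha s Hs) as (_ & _ & _ & _ & _ & HB & _).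
  destruct (frenet_orthonormal frenet_alpha s Hs) as (HTT & HNN & _ & HTN & _).
  rewrite HBb, mate_tangent, normal_sign, HB, vcross_scaler by exact Hs.
  unfold beta'; rewrite vcross_cross_orthonormal by assumption; reflexivity.
Qed.

Lemma mate_torsion s : inI a b s -> tb s = tau s * x1 s.
Proof.
  intros Hs; destruct (frenet_beta s Hs) as (_ & _ & _ & _ & _ & _ & HNb').
  assert (HNb'' : is_vderive Nb s (vscale eps (vscale (- tau s) (N s)))).
  { apply (is_vderive_ext_loc (fun u => vscale eps (B u))).
    - apply (filter_imp (inI a b)); [|apply locally_inI, Hs].
      intros u Hu; symmetry; apply normal_sign, Hu.
    - apply is_vderive_const_scale, (frenet_B_derive frenet_alpha s Hs). }
  pose proof (is_vderive_unique _ _ _ _ HNb' HNb'') as E.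
  rewrite mate_tangent, mate_binormal in E by exact Hs.
  assert (Ecomb : vcomb (T s) (N s) (B s) (- kb s * x1 s + tb s * eps * x2 s)
                    (- kb s * x2 s - tb s * eps * x1 s) 0
                  = vcomb (T s) (N s) (B s) 0 (- (eps * tau s)) 0).
  { etransitivity; [|etransitivity; [exact E|]]; unfold vcomb, beta'; V3_ring. }
  destruct (vcomb_coords _ _ _ (- kb s * x1 s + tb s * eps * x2 s) (- kb s * x2 s - tb s * eps * x1 s) 0
              (frenet_orthonormal frenet_alpha s Hs)) as (C1 & C2 & _).
  destruct (vcomb_coords _ _ _ 0 (- (eps * tau s)) 0
              (frenet_orthonormal frenet_alpha s Hs)) as (C1' & C2' & _).
  rewrite Ecomb, C1' in C1; rewrite Ecomb, C2' in C2.
  assert (Hunit : x1 s * x1 s + x2 s * x2 s = 1) by (rewrite <- (x_unit s Hs); ring).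
  rewrite (mate_curvature s Hs) in C1, C2.
  destruct eps_sign; subst eps; clear - C1 C2 Hunit; nsatz.
Qed.

End OsculatingMate.

Theorem theorem3
  (a b : Rbar) (alpha : R -> V3) (T N B : R -> V3) (kappa tau : R -> R)
  (x1 x2 : R -> R) (beta : R -> V3)
  (Tb Nb Bb : R -> V3) (kb tb : R -> R) :
  (* alpha is a unit speed Frenet curve on I with Frenet apparatus {T,N,B,kappa,tau} *)
  FrenetApparatus a b alpha T N B kappa tau ->
  (* x1, x2 differentiable with x1^2 + x2^2 = 1 *)
  (forall s, inI a b s -> ex_derive x1 s /\ ex_derive x2 s) ->
  (forall s, inI a b s -> x1 s ^ 2 + x2 s ^ 2 = 1) ->
  (* beta' = x1 T + x2 N *)
  (forall s, inI a b s -> is_vderive beta s (vadd (vscale (x1 s) (T s)) (vscale (x2 s) (N s)))) ->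
  (* beta'' is orthogonal to span{T, N} *)
  (forall s, inI a b s -> exists v,
      is_vderive (fun u => vadd (vscale (x1 u) (T u)) (vscale (x2 u) (N u))) s v /\
      vdot v (T s) = 0 /\ vdot v (N s) = 0) ->
  (* beta is a Frenet curve with Frenet apparatus {Tb,Nb,Bb,kb,tb} *)
  FrenetApparatus a b beta Tb Nb Bb kb tb ->
  exists theta : R -> R,
    (forall s, inI a b s -> is_derive theta s (kappa s)) /\
    exists eps : R, (eps = 1 \/ eps = -1) /\
    forall s, inI a b s ->
      x1 s = sin (theta s) /\ x2 s = cos (theta s) /\
      Tb s = vadd (vscale (sin (theta s)) (T s)) (vscale (cos (theta s)) (N s)) /\
      Nb s = vscale eps (B s) /\
      Bb s = vscale eps (vadd (vscale (cos (theta s)) (T s)) (vscale (- sin (theta s)) (N s))) /\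
      kb s = eps * tau s * cos (theta s) /\
      tb s = tau s * sin (theta s).
Proof.
  intros Halpha Hx Hunit Hbeta Hosc Hframe.
  destruct (mate_angle Halpha Hx Hunit Hosc) as [theta [Htheta Hangle]].
  destruct (mate_normal_sign Halpha Hx Hbeta Hosc Hframe) as [eps [Heps HNb]].
  exists theta; split; [exact Htheta|].
  exists eps; split; [exact Heps|].
  intros s Hs; destruct (Hangle s Hs) as [<- <-].
  repeat split.
  - exact (mate_tangent Hbeta Hframe s Hs).
  - exact (HNb s Hs).
  - exact (mate_binormal Halpha Hbeta Hframe HNb s Hs).
  - exact (mate_curvature Halpha Hx Hbeta Hosc Hframe Heps HNb s Hs).
  - exact (mate_torsion Halpha Hx Hunit Hbeta Hosc Hframe Heps HNb s Hs).
Qed.
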